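(* Let $t\ge 2$ and let $S=\{s_1,\ldots,s_t\}\subseteq BS(1,3)$ with $s_i=b^{m_i}a^{x_i}$, where $x_1,\dots,x_t\in\mathbb Z$ and $1\le m_1<m_2<\cdots<m_t$ are integers, so $k=|S|=t$. If $S$ is non-abelian, then $|S^2|\geq 4k-4$.
   Context: $BS(1,3)=\langle a,b\mid ab=ba^3\rangle$, in which $(b^m a^x)(b^n a^y)=b^{m+n}a^{y+3^n x}$ for integers $m,n\ge0$ and $x,y\in\mathbb Z$. $S^2=\{st: s,t\in S\}$. A set is non-abelian if the subgroup it generates is non-abelian. *)

From HB Require Import structures.
From mathcomp Require Import all_boot all_order all_algebra.
Set Implicit Arguments. Unset Strict Implicit. Unset Printing Implicit Defensive.
Import Order.TTheory GRing.Theory Num.Theory.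
Local Open Scope ring_scope.

(* BS(1,3) = <a,b | ab = ba^3> is isomorphic to Z[1/3] ⋊ Z; we embed it in
   Q ⋊ Z. The pair (m, x) stands for b^m a^x, with the product
   (b^m a^x)(b^n a^y) = b^(m+n) a^(y + 3^n x)   (m, n, x, y possibly any). *)
Definition bs := (int * rat)%type.

Definition bs_one : bs := (0, 0).
Definition bs_mul (g h : bs) : bs := (g.1 + h.1, h.2 + (3%:Q) ^ h.1 * g.2).
Definition bs_inv (g : bs) : bs := (- g.1, - ((3%:Q) ^ (- g.1) * g.2)).

Definition bs_elt (m : nat) (x : int) : bs := (m%:Z, x%:~R).

Inductive gen (S : seq bs) : bs -> Prop :=
  | gen_mem g : g \in S -> gen S g
  | gen_one : gen S bs_one
  | gen_inv g : gen S g -> gen S (bs_inv g)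
  | gen_mul g h : gen S g -> gen S h -> gen S (bs_mul g h).

Definition nonabelian (S : seq bs) : Prop :=
  exists g h, [/\ gen S g, gen S h & bs_mul g h <> bs_mul h g].

Definition sqset (S : seq bs) : seq bs :=
  undup [seq bs_mul s t | s <- S, t <- S].

From HB Require Import structures.
From mathcomp Require Import all_boot all_order all_algebra ring zify.
Set Implicit Arguments.
Unset Strict Implicit.
Unset Printing Implicit Defensive.
Import Order.TTheory GRing.Theory Num.Theory.
Local Open Scope ring_scope.

(* BS(1,3) acts on Q by affine maps, b^m a^x sending z to 3^m z + x.  An
   element with m <> 0 has a unique fixed point, two elements fixing a common
   point commute, and an element commuting with one of slope 3^m <> 1 fixes
   its fixed point; so S is non-abelian exactly when the fixed points p_i of
   the s_i are not all equal.  Products s_i s_j live at level m_i + m_j.  When s_t is the first generator whose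
   fixed point differs from p_0, the 2t-1 distinct levels 2m_0 < m_0+m_1 <
   2m_1 < ... give 2t-1 old products, while s_i s_t, s_t s_i (i < t) and s_t^2
   are 2t+1 new ones: they do not fix p_0, unlike every old product.  Past that
   point it suffices to find four new products: s_t^2, s_(t-1) s_t, and either
   s_t s_(t-1) together with whichever of s_(t-2) s_t, s_t s_(t-2) differs from
   s_(t-1)^2 (when p_(t-1) <> p_t), or s_j s_t, s_t s_j for the largest j with
   p_j <> p_t (when p_(t-1) = p_t). *)

Definition bs_act (r : rat) (g : bs) : rat := 3%:Q ^ g.1 * r + g.2.

Definition fixes (g : bs) (r : rat) : Prop := bs_act r g = r.

Lemma three_neq0 : 3%:Q != 0. Proof. by []. Qed.

Lemma exp3z_eq1 (n : int) : (3%:Q ^ n == 1) = (n == 0).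
Proof. by rewrite pexprz_eq1 // orbF. Qed.

Lemma bs_act_one r : bs_act r bs_one = r.
Proof. by rewrite /bs_act expr0z mul1r addr0. Qed.

Lemma bs_act_mul r g h : bs_act r (bs_mul g h) = bs_act (bs_act r g) h.
Proof. by rewrite /bs_act /= (expfzDr _ _ three_neq0); ring. Qed.

Lemma bs_mulV g : bs_mul g (bs_inv g) = bs_one.
Proof. by rewrite /bs_mul /= subrr addNr. Qed.

Lemma bs_act_inj g : injective (bs_act^~ g).
Proof. by move=> r r' /addIr /mulfI; apply; rewrite expfz_neq0. Qed.

Lemma fixes_one r : fixes bs_one r.
Proof. exact: bs_act_one. Qed.

Lemma fixes_mul g h r : fixes g r -> fixes h r -> fixes (bs_mul g h) r.
Proof. by rewrite /fixes bs_act_mul => -> ->. Qed.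

Lemma fixes_inv g r : fixes g r -> fixes (bs_inv g) r.
Proof. by rewrite /fixes => gr; rewrite -{1}gr -bs_act_mul bs_mulV bs_act_one. Qed.

Lemma fixes_gen S g r : (forall s, s \in S -> fixes s r) -> gen S g -> fixes g r.
Proof.
move=> Sr; elim=> {g} [s /Sr //| | g _ | g h _ gr _ hr].
- exact: fixes_one.
- exact: fixes_inv.
- exact: fixes_mul.
Qed.

Lemma fixes_mulKl g h r : fixes g r -> fixes (bs_mul g h) r -> fixes h r.
Proof. by rewrite /fixes bs_act_mul => ->. Qed.

Lemma fixes_mulKr g h r : fixes g r -> fixes (bs_mul h g) r -> fixes h r.
Proof. by rewrite /fixes bs_act_mul => gr; rewrite -{2}gr => /bs_act_inj. Qed.

Lemma fixes_uniq g r r' : g.1 != 0 -> fixes g r -> fixes g r' -> r = r'.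
Proof.
rewrite /fixes /bs_act -exp3z_eq1 => g1 gr gr'.
have : (3%:Q ^ g.1 - 1) * (r - r') = (3%:Q ^ g.1 * r + g.2 - r) - (3%:Q ^ g.1 * r' + g.2 - r').
  by ring.
by rewrite gr gr' !subrr => /eqP; rewrite mulf_eq0 subr_eq0 (negbTE g1) subr_eq0 => /eqP.
Qed.

Lemma fixes_commute g h r : fixes g r -> fixes h r -> bs_mul g h = bs_mul h g.
Proof.
rewrite /fixes /bs_act /bs_mul => gr hr; congr pair; first exact: addrC.
have -> : g.2 = r - 3%:Q ^ g.1 * r by rewrite -{1}gr; ring.
have -> : h.2 = r - 3%:Q ^ h.1 * r by rewrite -{1}hr; ring.
ring.
Qed.

Lemma commute_fixes g h r :
  g.1 != 0 -> fixes g r -> bs_mul g h = bs_mul h g -> fixes h r.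
Proof.
move=> g1 gr gh; apply: (@fixes_uniq g (bs_act r h) r g1 _ gr).
by rewrite /fixes -bs_act_mul -gh bs_act_mul gr.
Qed.

Lemma sqset_subset (S S' : seq bs) : {subset S <= S'} -> {subset sqset S <= sqset S'}.
Proof.
move=> SS' g; rewrite !mem_undup => /allpairsP [[u v] /= [uS vS ->]].
by apply: allpairs_f; apply: SS'.
Qed.

Lemma size_sqset_grow (S S' new : seq bs) :
  {subset S <= S'} -> uniq new -> {subset new <= sqset S'} ->
  (forall g, g \in new -> g \notin sqset S) ->
  (size (sqset S) + size new <= size (sqset S'))%N.
Proof.
move=> SS' new_uniq newS' new_fresh; rewrite -size_cat; apply: uniq_leq_size.
  rewrite cat_uniq undup_uniq new_uniq andbT /=.
  by apply/hasPn => g /new_fresh.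
by move=> g; rewrite mem_cat => /orP [/(sqset_subset SS') | /newS'].
Qed.

Section Squares.

Variables (m : nat -> nat) (x : nat -> int) (N : nat).
Hypothesis m0_gt0 : (0 < m 0)%N.
Hypothesis m_mono : forall i j, (i < j < N)%N -> (m i < m j)%N.

Local Notation s i := (bs_elt (m i) (x i)).

Definition gens T := [seq s i | i <- iota 0 T].

Definition fixpt i : rat := (x i)%:~R / (1 - 3%:Q ^+ m i).

Definition common_fixpt T := all (fun k => fixpt k == fixpt 0) (iota 0 T).

Lemma m_lt i j : (i < j)%N -> (j < N)%N -> (m i < m j)%N.
Proof. by move=> ij jN; apply: m_mono; rewrite ij. Qed.

Lemma m_le i j : (i <= j)%N -> (j < N)%N -> (m i <= m j)%N.
Proof. by rewrite leq_eqVlt => /orP [/eqP -> // | ij jN]; exact/ltnW/m_lt. Qed.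

Lemma m_inj i j : (i < N)%N -> (j < N)%N -> m i = m j -> i = j.
Proof.
move=> iN jN mij; case: (ltngtP i j) => // [ij | ji].
- by have := m_lt ij jN; rewrite mij ltnn.
- by have := m_lt ji iN; rewrite mij ltnn.
Qed.

Lemma m_gt0 i : (i < N)%N -> (0 < m i)%N.
Proof. by move=> iN; apply: leq_trans m0_gt0 (m_le (leq0n i) iN). Qed.

Lemma fixes_s i r : (i < N)%N -> fixes (s i) r <-> r = fixpt i.
Proof.
move=> iN; rewrite /fixes /bs_act /fixpt /= -exprnP.
have nz : 1 - 3%:Q ^+ m i != 0.
  by rewrite subr_eq0 eq_sym exprnP exp3z_eq1 -lt0n m_gt0.
split=> [E | ->]; last by field.
have -> : (x i)%:~R = r * (1 - 3%:Q ^+ m i).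
  by rewrite mulrBr mulr1 mulrC -{1}E addrAC subrr add0r.
by rewrite mulfK.
Qed.

Lemma fixes_s_fixpt i : (i < N)%N -> fixes (s i) (fixpt i).
Proof. by move=> iN; apply/fixes_s. Qed.

Lemma level_mul_s a b : (bs_mul (s a) (s b)).1 = (m a + m b)%N.
Proof. by rewrite /= PoszD. Qed.

Lemma mul_s_level a b c d :
  bs_mul (s a) (s b) = bs_mul (s c) (s d) -> (m a + m b = m c + m d)%N.
Proof. by move/(congr1 fst); rewrite !level_mul_s => -[]. Qed.

Lemma mul_s_neq_level a b c d :
  (m a + m b != m c + m d)%N -> bs_mul (s a) (s b) != bs_mul (s c) (s d).
Proof. by apply: contraNneq => /mul_s_level ->. Qed.

Lemma mul_s_noncommute a b : (a < N)%N -> (b < N)%N -> fixpt a != fixpt b ->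
  bs_mul (s a) (s b) != bs_mul (s b) (s a).
Proof.
move=> aN bN ab; apply: contra ab => /eqP comm; apply/eqP/(fixes_s _ bN).
by apply: commute_fixes comm; [rewrite /= -lt0n m_gt0 | exact: fixes_s_fixpt].
Qed.

Lemma gens_subset T : {subset gens T <= gens T.+1}.
Proof.
move=> g /mapP [i iT ->]; apply/mapP; exists i => //.
by move: iT; rewrite !mem_iota !add0n ltnS; apply: ltnW.
Qed.

Lemma mem_sqset_gens T a b :
  (a < T)%N -> (b < T)%N -> bs_mul (s a) (s b) \in sqset (gens T).
Proof.
move=> aT bT; rewrite mem_undup; apply: allpairs_f; apply/mapP;
  by [exists a; rewrite ?mem_iota | exists b; rewrite ?mem_iota].
Qed.

Lemma sqset_gensP T g : g \in sqset (gens T) ->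
  exists a b, [/\ (a < T)%N, (b < T)%N & g = bs_mul (s a) (s b)].
Proof.
rewrite mem_undup => /allpairsP [[u v] /= [/mapP [a aT ->] /mapP [b bT ->] ->]].
by exists a, b; move: aT bT; rewrite !mem_iota.
Qed.

Lemma notin_sqset_gens_high T a b : (T <= N)%N ->
  (m T.-1 + m T.-1 < m a + m b)%N -> bs_mul (s a) (s b) \notin sqset (gens T).
Proof.
move=> TN high; apply/negP => /sqset_gensP [c [d [cT dT /mul_s_level E]]].
have mT k : (k < T)%N -> (m k <= m T.-1)%N by move=> kT; apply: m_le; lia.
by move: high (mT c cT) (mT d dT); rewrite E; lia.
Qed.

Lemma notin_sqset_gens_fixes T r g : (T <= N)%N ->
  (forall k, (k < T)%N -> fixpt k = r) -> ~ fixes g r -> g \notin sqset (gens T).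
Proof.
move=> TN Tr gr; apply/negP => /sqset_gensP [a [b [aT bT gab]]]; apply: gr.
by rewrite gab; apply: fixes_mul; apply/fixes_s; rewrite ?Tr //; apply: leq_trans TN.
Qed.

Lemma size_sqset_gens_ge T : (T < N)%N -> (2 * T + 1 <= size (sqset (gens T.+1)))%N.
Proof.
elim: T => [_ | T IH TN].
  have : bs_mul (s 0) (s 0) \in sqset (gens 1) by apply: mem_sqset_gens.
  by case: (sqset _).
have mT : (m T < m T.+1)%N by apply: m_lt.
apply: leq_trans (size_sqset_grow (new := [:: bs_mul (s T) (s T.+1); bs_mul (s T.+1) (s T.+1)])
  (@gens_subset T.+1) _ _ _); first by move: (IH (ltnW TN)); rewrite /=; lia.
- by rewrite /= inE andbT; apply/eqP => /mul_s_level; lia.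
- by move=> g; rewrite !inE => /orP [] /eqP ->; apply: mem_sqset_gens.
- by move=> g; rewrite !inE => /orP [] /eqP ->; apply: notin_sqset_gens_high => //=; lia.
Qed.

Lemma common_fixptP T : reflect (forall k, (k < T)%N -> fixpt k = fixpt 0) (common_fixpt T).
Proof.
apply: (iffP allP) => [c k kT | c k]; last by rewrite mem_iota => /c /eqP.
by apply/eqP/c; rewrite mem_iota.
Qed.

Lemma common_fixptS T : common_fixpt T.+1 = common_fixpt T && (fixpt T == fixpt 0).
Proof. by rewrite /common_fixpt -addn1 iotaD all_cat /= andbT. Qed.

Lemma uniq_mul_s_l n c : (n <= N)%N -> uniq [seq bs_mul (s k) (s c) | k <- iota 0 n].
Proof.
move=> nN; rewrite map_inj_in_uniq ?iota_uniq // => k l.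
rewrite !mem_iota /= => kn ln /mul_s_level mkl; apply: m_inj; lia.
Qed.

Lemma uniq_mul_s_r n c : (n <= N)%N -> uniq [seq bs_mul (s c) (s k) | k <- iota 0 n].
Proof.
move=> nN; rewrite map_inj_in_uniq ?iota_uniq // => k l.
rewrite !mem_iota /= => kn ln /mul_s_level mkl; apply: m_inj; lia.
Qed.

Lemma size_sqset_gens_fresh_fixpt t : (t < N)%N -> common_fixpt t ->
  fixpt t != fixpt 0 -> (4 * t <= size (sqset (gens t.+1)))%N.
Proof.
move=> tN /common_fixptP common tfix.
have t_gt0 : (0 < t)%N by apply: contraNT tfix; rewrite -eqn0Ngt => /eqP ->.
have mt1 : (m t.-1 < m t)%N by apply: m_lt; lia.
set left := [seq bs_mul (s k) (s t) | k <- iota 0 t].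
set right := [seq bs_mul (s t) (s k) | k <- iota 0 t.+1].
have s_fixpt0 k : (k < t)%N -> fixes (s k) (fixpt 0).
  by move=> kt; apply/fixes_s; [lia | rewrite common].
have st_nfix : ~ fixes (s t) (fixpt 0) by move/fixes_s => /(_ tN) /esym /eqP; apply/negP.
apply: leq_trans (size_sqset_grow (new := left ++ right) (@gens_subset t) _ _ _).
- have := size_sqset_gens_ge (leq_ltn_trans (leq_pred t) tN).
  by rewrite prednK // size_cat !size_map !size_iota; lia.
- rewrite cat_uniq uniq_mul_s_l ?(ltnW tN) // uniq_mul_s_r // andbT.
  apply/hasPn => _ /mapP [l lt ->]; apply/mapP => -[k kt E].
  have kl : k = l by apply: m_inj; move: (mul_s_level E) kt lt; rewrite !mem_iota; lia.
  move: E kt; rewrite -kl mem_iota /= => E kt.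
  by move/eqP: E; apply/negP/mul_s_noncommute; [| lia | rewrite (common k) //; lia].
- move=> g; rewrite mem_cat => /orP [] /mapP [k]; rewrite mem_iota /= => kt ->;
    by apply: mem_sqset_gens; lia.
- move=> g; rewrite mem_cat => /orP [] /mapP [k]; rewrite mem_iota /= => kt ->.
    by apply: (notin_sqset_gens_fixes (ltnW tN) common) => /(fixes_mulKl (s_fixpt0 k kt))/st_nfix.
  have [{}kt | ->] : (k < t)%N \/ k = t by lia.
    by apply: (notin_sqset_gens_fixes (ltnW tN) common) => /(fixes_mulKr (s_fixpt0 k kt))/st_nfix.
  by apply: notin_sqset_gens_high; [apply: ltnW | lia].
Qed.

Lemma size_sqset_gens_same_fixpt t : (t < N)%N -> fixpt t.-1 = fixpt t ->
  (exists k, (k < t)%N && (fixpt k != fixpt t)) ->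
  (size (sqset (gens t)) + 4 <= size (sqset (gens t.+1)))%N.
Proof.
move=> tN tt ex.
have ub k : (k < t)%N && (fixpt k != fixpt t) -> (k <= t)%N by case/andP => /ltnW.
have [j /andP [jt jfix] jmax] := ex_maxnP ex ub.
have jt1 : (j < t.-1)%N.
  suff : j != t.-1 by lia.
  by apply: contraNneq jfix => ->; rewrite tt.
have mt1 : (m t.-1 < m t)%N by apply: m_lt => //; lia.
have fix_above k : (k < t)%N -> (m j < m k)%N -> fixes (s k) (fixpt t).
  move=> kt mjk; apply/fixes_s; first lia.
  case: (eqVneq (fixpt k) (fixpt t)) => // kfix.
  have := jmax k; rewrite kt kfix => /(_ isT) kj.
  by have := m_le kj (ltn_trans jt tN); lia.
have fix_level g : g \in sqset (gens t) -> g.1 = (m j + m t)%N -> fixes g (fixpt t).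
  move=> /sqset_gensP [a [b [a_lt b_lt ->]]]; rewrite level_mul_s => -[E].
  have mt k : (k < t)%N -> (m k <= m t.-1)%N by move=> kt; apply: m_le; lia.
  by apply: fixes_mul; apply: fix_above => //; have := mt a a_lt; have := mt b b_lt; lia.
have mjt1 : (m j < m t.-1)%N by apply: m_lt => //; lia.
have j_nfix : ~ fixes (s j) (fixpt t).
  by move/fixes_s => /(_ (ltn_trans jt tN)) /eqP; apply/negP; rewrite eq_sym.
apply: (size_sqset_grow (new := [:: bs_mul (s t) (s t); bs_mul (s t.-1) (s t);
  bs_mul (s j) (s t); bs_mul (s t) (s j)])); first exact: gens_subset.
- rewrite /= !inE !negb_or !andbT.
  repeat (apply/andP; split); try (apply: mul_s_neq_level; lia).
  by apply: mul_s_noncommute; lia.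
- by move=> g; rewrite !inE => /or4P [] /eqP ->; apply: mem_sqset_gens; lia.
- move=> g; rewrite !inE => /or4P [] /eqP ->.
  + by apply: notin_sqset_gens_high; lia.
  + by apply: notin_sqset_gens_high; lia.
  + apply/negP => /fix_level; rewrite level_mul_s => /(_ erefl).
    by move/(fixes_mulKr (fixes_s_fixpt tN)).
  + apply/negP => /fix_level; rewrite level_mul_s addnC => /(_ erefl).
    by move/(fixes_mulKl (fixes_s_fixpt tN)).
Qed.

Lemma size_sqset_gens_new_fixpt t : (2 <= t)%N -> (t < N)%N -> fixpt t.-1 != fixpt t ->
  (size (sqset (gens t)) + 4 <= size (sqset (gens t.+1)))%N.
Proof.
move=> t2 tN tt.
have m21 : (m t.-2 < m t.-1)%N by apply: m_lt; lia.
have m1t : (m t.-1 < m t)%N by apply: m_lt; lia.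
have [X [X_neq X_def]] : exists X, X != bs_mul (s t.-1) (s t.-1) /\
    (X = bs_mul (s t.-2) (s t) \/ X = bs_mul (s t) (s t.-2)).
  case: (eqVneq (bs_mul (s t.-2) (s t)) (bs_mul (s t.-1) (s t.-1))) => [E1 | ]; last first.
    by exists (bs_mul (s t.-2) (s t)); split; [|left].
  exists (bs_mul (s t) (s t.-2)); split; last by right.
  apply/eqP => E2; move/eqP: tt; apply.
  have fix2 : fixes (s t.-2) (fixpt t).
    apply: (commute_fixes _ (fixes_s_fixpt tN)); last by rewrite E1 E2.
    by rewrite /= -lt0n; lia.
  apply: (@fixes_uniq (bs_mul (s t.-1) (s t.-1))); first by rewrite level_mul_s; lia.
    by apply: fixes_mul; apply: fixes_s_fixpt; lia.
  by rewrite -E1; apply: fixes_mul fix2 (fixes_s_fixpt tN).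
have X_level : X.1 = (m t.-2 + m t)%N by case: X_def => ->; rewrite level_mul_s // addnC.
have X_fresh : X \notin sqset (gens t).
  apply/negP => /sqset_gensP [a [b [a_lt b_lt Xab]]].
  move: X_level; rewrite Xab level_mul_s => -[E].
  have mt k : (k < t)%N -> (m k <= m t.-1)%N by move=> kt; apply: m_le; lia.
  have m2 k : (k < t.-1)%N -> (m k <= m t.-2)%N by move=> kt; apply: m_le; lia.
  have [a1 b1] : a = t.-1 /\ b = t.-1.
    case: (ltnP a t.-1) => [/m2 | ?]; first by have := mt b b_lt; lia.
    case: (ltnP b t.-1) => [/m2 | ?]; first by have := mt a a_lt; lia.
    lia.
  by move/eqP: X_neq; rewrite Xab a1 b1.
apply: (size_sqset_grow (new := [:: bs_mul (s t) (s t); bs_mul (s t.-1) (s t);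
  bs_mul (s t) (s t.-1); X])); first exact: gens_subset.
- rewrite /= !inE !negb_or !andbT.
  repeat (apply/andP; split); try (apply: mul_s_neq_level; lia);
    try (rewrite eq_sym; apply/negP => /eqP /(congr1 fst); rewrite X_level level_mul_s => -[]; lia).
  by apply: mul_s_noncommute; lia.
- move=> g; rewrite !inE => /or4P [] /eqP ->; try (apply: mem_sqset_gens; lia).
  by case: X_def => ->; apply: mem_sqset_gens; lia.
- move=> g; rewrite !inE => /or4P [] /eqP -> //; apply: notin_sqset_gens_high; lia.
Qed.

Lemma not_common_fixpt_gt1 T : ~~ common_fixpt T -> (1 < T)%N.
Proof. by case: T => [|[|]] //; rewrite /common_fixpt /= eqxx. Qed.

Lemma not_common_fixpt_avoid T r : ~~ common_fixpt T ->
  exists k, (k < T)%N && (fixpt k != r).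
Proof.
move=> /allPn [k]; rewrite mem_iota /= => kT kfix.
case: (eqVneq (fixpt 0) r) => [<- | fix0]; first by exists k; rewrite kT.
by exists 0%N; rewrite fix0 andbT; apply: leq_ltn_trans kT.
Qed.

Lemma size_sqset_gens_nonconstant T : (T <= N)%N -> ~~ common_fixpt T ->
  (4 * T - 4 <= size (sqset (gens T)))%N.
Proof.
elim: T => [// | t IH] tN; rewrite common_fixptS negb_and.
case: (boolP (common_fixpt t)) => [common | not_common] /=.
  by move=> tfix; have := size_sqset_gens_fresh_fixpt tN common tfix; lia.
move=> _; have t2 := not_common_fixpt_gt1 not_common.
apply: leq_trans (_ : size (sqset (gens t)) + 4 <= _)%N.
  by have := IH (ltnW tN) not_common; lia.
case: (eqVneq (fixpt t.-1) (fixpt t)) => [same | new].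
  exact: size_sqset_gens_same_fixpt (not_common_fixpt_avoid _ not_common).
exact: size_sqset_gens_new_fixpt.
Qed.

Lemma nonabelian_gens T : (T <= N)%N -> nonabelian (gens T) -> ~~ common_fixpt T.
Proof.
move=> TN [g [h [gen_g gen_h]]]; apply: contra_notN => /common_fixptP common.
have gens_fix u : u \in gens T -> fixes u (fixpt 0).
  by move=> /mapP [k]; rewrite mem_iota /= => kT ->; apply/fixes_s; rewrite ?common //; lia.
exact: fixes_commute (fixes_gen gens_fix gen_g) (fixes_gen gens_fix gen_h).
Qed.

End Squares.

Theorem lemma2p4 (t : nat) (m : nat -> nat) (x : nat -> int) :
  (2 <= t)%N ->
  (1 <= m 0)%N ->
  (forall i j, (i < j < t)%N -> (m i < m j)%N) ->
  let S := [seq bs_elt (m i) (x i) | i <- iota 0 t] in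
  nonabelian S ->
  (4 * t - 4 <= size (sqset S))%N.
Proof.
move=> _ m0_gt0 m_mono S /(nonabelian_gens m0_gt0 m_mono (leqnn t)).
exact: (size_sqset_gens_nonconstant m0_gt0 m_mono (leqnn t)).
Qed.
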